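(* Let $f:\mathbb{R}^n\to\mathbb{R}^n$ be continuous, $\Gamma\in\mathbb{R}^{n\times n}$, and let $s(t)$ be a solution of $\dot s(t)=f(s(t))$. Let $L=(l_{ij})\in\mathbb{R}^{m\times m}$ be irreducible with $\mathrm{Rank}(L)=m-1$, $l_{ij}\ge 0$ for $i\ne j$ and $\sum_{j=1}^m l_{ij}=0$ for every $i$, and let $\varepsilon>0$. Consider the pinning-controlled system $$\frac{dx_1(t)}{dt}=f(x_1(t))+c\sum_{j=1}^m l_{1j}\Gamma x_j(t)-c\varepsilon(x_1(t)-s(t)),$$ $$\frac{dx_i(t)}{dt}=f(x_i(t))+c\sum_{j=1}^m l_{ij}\Gamma x_j(t),\qquad i=2,\dots,m.$$ Suppose there exist a positive definite $P\in\mathbb{R}^{n\times n}$, $\Delta\in\mathbb{R}^{n\times n}$ and $\epsilon>0$ with $$(x-y)^T P\big\{[f(x)-f(y)]-\Delta(x-y)\big\}\le -\epsilon (x-y)^T(x-y)\quad\text{for all }x,y\in\mathbb{R}^n,$$ that $\mathrm{Ran}(P\Delta)=\mathrm{Ran}(P\Gamma)$ (in particular if $\Delta=\Gamma$), and that $P\Gamma=BB^T$ for some matrix $B$ with $P\Gamma$ positive definite on $\mathrm{Ran}(P\Gamma)$. Then, if the coupling strength $c$ is large enough, $x_i(t)-s(t)\to 0$ as $t\to\infty$ for all $i=1,\dots,m$.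
   Context: $\mathrm{Ran}(M)$ is the range of $M$; ''positive definite on $\mathrm{Ran}(P\Gamma)$'' means $u^TP\Gamma u>0$ for all nonzero $u\in\mathrm{Ran}(P\Gamma)$. *)

From HB Require Import structures.
From mathcomp Require Import all_boot all_order all_algebra.
From mathcomp Require Import all_classical all_reals all_analysis.
Set Implicit Arguments. Unset Strict Implicit. Unset Printing Implicit Defensive.
Import Order.TTheory GRing.Theory Num.Theory.
Local Open Scope ring_scope.

Definition qform (R : realType) (n : nat) (u : 'cV[R]_n) (A : 'M[R]_n) (v : 'cV[R]_n) : R :=
  (u^T *m A *m v) 0 0.

Definition Ran (R : realType) (p q : nat) (M : 'M[R]_(p, q)) (v : 'cV[R]_p) : Prop :=
  exists u : 'cV[R]_q, v = M *m u.

Definition posdef (R : realType) (n : nat) (P : 'M[R]_n) : Prop :=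
  P^T = P /\ forall u : 'cV[R]_n, u != 0 -> 0 < qform u P u.

(* Irreducible square matrix: there is no partition of the index set into
   nonempty sets I, J with A i j = 0 for all i in I, j in J
   (equivalently, A is not permutation-similar to a block triangular matrix). *)
Definition irreducible_mx (R : realType) (m : nat) (A : 'M[R]_m) : Prop :=
  ~ exists I : {set 'I_m}, [/\ I != finset.set0, I != [set: 'I_m]%SET &
       forall i j, i \in I -> j \notin I -> A i j = 0].

From mathcomp Require Import all_boot all_order all_algebra.
From mathcomp Require Import all_classical all_reals all_analysis.
From mathcomp Require Import ring lra.
Set Implicit Arguments. Unset Strict Implicit. Unset Printing Implicit Defensive.
Import Order.TTheory GRing.Theory Num.Theory numFieldNormedType.Exports.
Local Open Scope classical_set_scope.
Local Open Scope ring_scope.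

(* Let xi > 0 be a left null vector of the irreducible coupling matrix L and take the
   Lyapunov function V(e) = sum_i xi_i e_i^T P e_i of the errors e_i = x_i - s.  Along
   solutions V' <= 2 (A(e) - c B(e)), where A(e) = sum_i xi_i e_i^T (P Delta - eps I) e_i
   and B(e) >= 0 collects the diffusive coupling
   (1/2) sum_ij xi_i l_ij (e_i - e_j)^T P Gamma (e_i - e_j) and the pinning term.  If
   B(e) = 0 then e_1 = 0 and, by irreducibility, B^T e_i = 0 for all i, so the range
   condition gives e_i^T P Delta e_i = 0 and A(e) < 0.  Compactness of the unit sphere
   (Finsler's lemma for 2-homogeneous functions) then yields A - c B <= -d |e|^2 for all
   large c, hence V' <= -alpha V and V tends to 0. *)

Section QuadraticForms.
Variables (R : realType) (n : nat).
Implicit Types (u v w : 'cV[R]_n) (A M : 'M[R]_n).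

Lemma qformE u A v : qform u A v = \sum_a \sum_b u a 0 * A a b * v b 0.
Proof.
rewrite /qform mxE exchange_big; apply: eq_bigr => b _; rewrite mxE mulr_suml.
by apply: eq_bigr => a _; rewrite mxE.
Qed.

Lemma qformDr u A v w : qform u A (v + w) = qform u A v + qform u A w.
Proof. by rewrite /qform mulmxDr mxE. Qed.

Lemma qformZl a u A v : qform (a *: u) A v = a * qform u A v.
Proof. by rewrite /qform linearZ /= -!scalemxAl mxE. Qed.

Lemma qformZr a u A v : qform u A (a *: v) = a * qform u A v.
Proof. by rewrite /qform -scalemxAr mxE. Qed.

Lemma qformNr u A v : qform u A (- v) = - qform u A v.
Proof. by rewrite -scaleN1r qformZr mulN1r. Qed.

Lemma qformDl u w A v : qform (u + w) A v = qform u A v + qform w A v.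
Proof. by rewrite /qform linearD /= mulmxDl mulmxDl mxE. Qed.

Lemma qformNl u A v : qform (- u) A v = - qform u A v.
Proof. by rewrite -scaleN1r qformZl mulN1r. Qed.

Lemma qformBl u w A v : qform (u - w) A v = qform u A v - qform w A v.
Proof. by rewrite qformDl qformNl. Qed.

Lemma qformBr u A v w : qform u A (v - w) = qform u A v - qform u A w.
Proof. by rewrite qformDr qformNr. Qed.

Lemma qformBm u A M v : qform u (A - M) v = qform u A v - qform u M v.
Proof. by rewrite /qform mulmxBr mulmxBl !mxE. Qed.

Lemma qform0r u A : qform u A 0 = 0.
Proof. by rewrite /qform mulmx0 mxE. Qed.

Lemma qform_sumr (I : finType) u A (F : I -> 'cV[R]_n) :
  qform u A (\sum_i F i) = \sum_i qform u A (F i).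
Proof. by rewrite /qform mulmx_sumr summxE. Qed.

Lemma qformMA u A M v : qform u (A *m M) v = qform u A (M *m v).
Proof. by rewrite /qform !mulmxA. Qed.

Lemma qform_tr u A v : qform u A v = qform v A^T u.
Proof.
rewrite /qform; have -> : v^T *m A^T *m u = (u^T *m A *m v)^T.
  by rewrite !trmx_mul trmxK mulmxA.
by rewrite [RHS]mxE.
Qed.

Lemma qform_sym u A v : A^T = A -> qform u A v = qform v A u.
Proof. by move=> Asym; rewrite qform_tr Asym. Qed.

Lemma qformZm a u A v : qform u (a *: A) v = a * qform u A v.
Proof. by rewrite /qform -scalemxAr -scalemxAl mxE. Qed.

Lemma qformZZ a u A v : qform (a *: u) A (a *: v) = a ^+ 2 * qform u A v.
Proof. by rewrite qformZl qformZr mulrA expr2. Qed.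

Lemma qform_gram k u (B : 'M[R]_(n, k)) :
  qform u (B *m B^T) u = \sum_l ((B^T *m u) l 0) ^+ 2.
Proof.
rewrite /qform; have -> : u^T *m (B *m B^T) *m u = (B^T *m u)^T *m (B^T *m u).
  by rewrite trmx_mul trmxK !mulmxA.
by rewrite mxE; apply: eq_bigr => l _; rewrite expr2 mxE.
Qed.

Lemma qform_gram_ge0 k u (B : 'M[R]_(n, k)) : 0 <= qform u (B *m B^T) u.
Proof. by rewrite qform_gram sumr_ge0 // => l _; rewrite sqr_ge0. Qed.

Lemma qform_gram_eq0 k u (B : 'M[R]_(n, k)) :
  qform u (B *m B^T) u = 0 -> B^T *m u = 0.
Proof.
rewrite qform_gram => /(psumr_eq0P (fun l _ => sqr_ge0 _)) sq0.
apply/matrixP => l j; rewrite (ord1 j) [RHS]mxE.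
by apply/eqP; rewrite -sqrf_eq0 sq0.
Qed.

Lemma qform1 u : qform u 1%:M u = \sum_a u a 0 ^+ 2.
Proof. by rewrite /qform mulmx1 mxE; apply: eq_bigr => a _; rewrite mxE expr2. Qed.

Lemma posdef1 : posdef (1%:M : 'M[R]_n).
Proof.
split=> [|u /eqP u0]; first exact: trmx1.
rewrite qform1 lt_neqAle sumr_ge0 ?andbT => [|a _]; last exact: sqr_ge0.
apply/eqP => /esym/(psumr_eq0P (fun a _ => sqr_ge0 _)) sq0.
apply: u0; apply/matrixP => a j; rewrite (ord1 j) [RHS]mxE.
by apply/eqP; rewrite -sqrf_eq0 sq0.
Qed.

Lemma posdef_ge0 P u : posdef P -> 0 <= qform u P u.
Proof.
case=> _ Ppos; have [->|/Ppos/ltW//] := eqVneq u 0.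
by rewrite /qform mulmx0 mxE.
Qed.

Lemma posdef_eq0 P u : posdef P -> qform u P u = 0 -> u = 0.
Proof.
by case=> _ Ppos qu0; apply/eqP; apply: contra_eqT qu0 => /Ppos/gt_eqF ->.
Qed.

Lemma qform_gram_range k A (B : 'M[R]_(n, k)) u w :
  A *m u = B *m B^T *m w -> B^T *m u = 0 -> qform u A u = 0.
Proof.
move=> Au Bu0; rewrite /qform.
have -> : u^T *m A *m u = (B^T *m u)^T *m (B^T *m w).
  by rewrite -mulmxA Au trmx_mul trmxK !mulmxA.
by rewrite Bu0 trmx0 mul0mx mxE.
Qed.

End QuadraticForms.

Section HomogeneousForms.
Variables (R : realType) (N : nat).
Implicit Types F G : 'rV[R]_N -> R.

Definition hom2 F := forall (a : R) v, F (a *: v) = a ^+ 2 * F v.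

Lemma hom2_0 F : hom2 F -> F 0 = 0.
Proof. by move=> homF; rewrite -(scale0r (0 : 'rV[R]_N)) homF expr2 !mul0r. Qed.

Lemma compact_unit_sphere : compact [set v : 'rV[R]_N | `|v| = 1].
Proof.
apply: bounded_closed_compact.
  by rewrite /= /bounded_near; near=> M => v /= ->; near: M; apply: nbhs_pinfty_ge.
rewrite (_ : [set v | _] = (fun v : 'rV[R]_N => `|v|) @^-1` [set 1]) //.
apply: preimage_closed; last exact: closed_eq.
by move=> v _; exact: norm_continuous.
Unshelve. all: by end_near.
Qed.

Lemma norm_normalize (v : 'rV[R]_N) : v != 0 -> `|(`|v|^-1 *: v)| = 1.
Proof.
by move=> v0; rewrite normrZ normrV ?unitfE ?normr_eq0 // normr_id mulVf ?normr_eq0.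
Qed.

Lemma hom2_unit_sphere F G (K : R) : hom2 F -> hom2 G -> 0 < K ->
  (forall u, `|u| = 1 -> G u <= K * F u) -> forall v, G v <= K * F v.
Proof.
move=> homF homG K0 GF v; have [->|v0] := eqVneq v 0.
  by rewrite hom2_0 // hom2_0 // mulr0.
have -> : v = `|v| *: (`|v|^-1 *: v) by rewrite scalerA mulfV ?scale1r ?normr_eq0.
rewrite homF homG mulrCA ler_wpM2l ?sqr_ge0 //; exact/GF/norm_normalize.
Qed.

Lemma hom2_dominated F G : continuous F -> continuous G -> hom2 F -> hom2 G ->
  (forall v, v != 0 -> 0 < F v) ->
  exists K, 0 < K /\ forall v, G v <= K * F v.
Proof.
move=> cF cG homF homG Fpos; set S := [set v : 'rV[R]_N | `|v| = 1].
have [S0|/set0P SN] := eqVneq S set0.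
  exists 1; split => //; apply: hom2_unit_sphere => // u Su.
  by have : S u by []; rewrite S0.
have [c Sc cmin] := compact_EVT_min SN compact_unit_sphere (continuous_subspaceT cF).
have [d Sd dmax] := compact_EVT_max SN compact_unit_sphere (continuous_subspaceT cG).
have Fc : 0 < F c.
  by apply: Fpos; apply: contra_eq_neq (set_mem Sc) => ->; rewrite normr0 eq_sym oner_eq0.
set M := Num.max (G d) 0.
have M0 : 0 <= M by rewrite le_max lexx orbT.
have K0 : 0 < M / F c + 1 by have := divr_ge0 M0 (ltW Fc); lra.
exists (M / F c + 1); split => //; apply: hom2_unit_sphere => // u Su.
have Su' : u \in S by rewrite inE.
have GuM : G u <= M by rewrite le_max dmax.
have FcFu := cmin _ Su'.
have : M <= M / F c * F u by rewrite -mulrA ler_peMr // ler_pdivlMl // mulr1.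
have : 0 < F u by apply: lt_le_trans FcFu.
nra.
Qed.

(* Compactness enters through the auxiliary
   form [B + A^-], with [A^- = (|A| - A) / 2], which is positive off [0] precisely because
   [A < 0] where [B = 0]. *)
Lemma hom2_Finsler A B Nf :
  continuous A -> continuous B -> continuous Nf ->
  hom2 A -> hom2 B -> hom2 Nf ->
  (forall v, 0 <= B v) -> (forall v, v != 0 -> 0 < Nf v) ->
  (forall v, v != 0 -> B v = 0 -> A v < 0) ->
  exists c0 d, 0 < d /\ forall c, c0 <= c -> forall v, A v - c * B v <= - d * Nf v.
Proof.
move=> cA cB cN homA homB homN B0 Npos AB.
pose phi v := B v + (`|A v| - A v) / 2.
have cphi : continuous phi.
  have cnA : continuous (fun v => `|A v|).
    by move=> v; exact: (continuous_comp (cA v) (@norm_continuous _ R^o _)).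
  have c2 : continuous (fun _ : 'rV[R]_N => 2^-1 : R) by move=> v; exact: cst_continuous.
  by move=> v; exact: (continuousD (cB v) (continuousM (continuousB (cnA v) (cA v)) (c2 v))).
have homphi : hom2 phi.
  by move=> a v; rewrite /phi homA homB normrM ger0_norm ?sqr_ge0 //; ring.
have phipos v : v != 0 -> 0 < phi v.
  move=> v0; rewrite /phi; have := B0 v; have := ler_norm (A v).
  have [Bv0|Bv0] := eqVneq (B v) 0.
    by have Aneg := AB v v0 Bv0; rewrite Bv0 ltr0_norm //; lra.
  have : 0 < B v by rewrite lt_neqAle eq_sym Bv0 B0.
  lra.
have [K1 [K1_0 NK1]] := hom2_dominated cphi cN homphi homN phipos.
have [K2 [K2_0 AK2]] := hom2_dominated cN cA homN homA Npos.
exists (2 * K1 * K2 + 1), (K1^-1 / 2); split; first by rewrite divr_gt0 ?invr_gt0.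
move=> c c_ge v; set q := Nf v / K1.
have Nq : Nf v = K1 * q by rewrite /q mulrC divfK ?gt_eqF.
have Nf0 : 0 <= Nf v by have [->|/Npos/ltW //] := eqVneq v 0; rewrite (hom2_0 homN).
have q0 : 0 <= q by rewrite divr_ge0 // ltW.
have qphi : q <= phi v by rewrite ler_pdivrMr // mulrC.
have AKq : A v <= K1 * K2 * q by rewrite -mulrA mulrCA -Nq AK2.
have c0 : 0 <= c by apply: le_trans c_ge; rewrite addr_ge0 ?mulr_ge0 ?ltW.
have -> : - (K1^-1 / 2) * Nf v = - (q / 2) by rewrite Nq; field; rewrite gt_eqF.
have [Bq|Bq] := lerP (q / 2) (B v).
  have : c * (q / 2) <= c * B v by rewrite ler_wpM2l.
  have : (2 * K1 * K2 + 1) * (q / 2) <= c * (q / 2).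
    by apply: ler_wpM2r => //; rewrite divr_ge0.
  nra.
have cB0 : 0 <= c * B v by rewrite mulr_ge0.
have : `|A v| - A v > q by rewrite /phi in qphi; lra.
have [A0|A0] := lerP 0 (A v); first by rewrite ger0_norm //; lra.
by rewrite ltr0_norm //; lra.
Qed.

End HomogeneousForms.

Section LyapunovDecay.
Variable R : realType.

Lemma is_derive_expRM (a t : R) :
  is_derive t 1 (fun x => expR (a * x)) (expR (a * t) * a).
Proof.
have lin : is_derive t 1 (fun x : R => a * x) a.
  by apply: (is_derive_eq (is_deriveZ a (is_derive_id t 1))); rewrite /GRing.scale /= mulr1.
exact: (is_derive1_comp (is_derive_expR (a * t)) lin).
Qed.

Lemma lyapunov_cvg0 (V : R -> R) (al : R) : 0 < al -> (forall t : R, 0 <= V t) ->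
  (forall t : R, 0 < t -> exists2 dV, is_derive t 1 V dV & dV <= - al * V t) ->
  V t @[t --> +oo] --> 0.
Proof.
move=> al0 V0 dV; pose W t := V t * expR (al * t).
have dW (t : R) : 0 < t -> exists2 dw, is_derive t 1 W dw & dw <= 0.
  move=> t0; have [dv Vdv dvle] := dV t t0.
  have Wd := is_deriveM Vdv (is_derive_expRM al t).
  exists (V t * (expR (al * t) * al) + expR (al * t) * dv) => //.
  have e0 := expR_gt0 (al * t).
  have : expR (al * t) * dv <= expR (al * t) * (- al * V t) by rewrite ler_pM2l.
  nra.
have W_noninc (y : R) : 1 <= y -> W y <= W 1.
  have W'x (x : R) : x \in `]1, +oo[ -> exists2 dw, is_derive x 1 W dw & dw <= 0.
    by rewrite in_itv /= andbT => x1; apply: dW; apply: lt_trans x1.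
  apply: (@ler0_derive1_nincry _ W 1) => // [x /W'x [dw Wdw _]|x /W'x [dw Wdw dw0]|].
  - exact: ex_derive.
  - by rewrite derive1E derive_val.
  apply: derivable_within_continuous => x; rewrite in_itv /= andbT => x1.
  by have [dw Wdw _] := dW x (lt_le_trans ltr01 x1); exact: ex_derive.
have exp_decay : W 1 * expR (- (al * t)) @[t --> +oo] --> 0.
  rewrite -[X in _ --> X](mulr0 (W 1)); apply: cvgMl_tmp.
  have al_y : (fun t => al * t) @ +oo --> +oo by apply: gt0_cvgMry.
  exact: (cvg_comp _ _ al_y (@cvgr_expR R)).
apply: (squeeze_cvgr _ (cvg_cst 0) exp_decay); near=> t; rewrite V0 /=.
rewrite expRN ler_pdivlMr ?expR_gt0 //; apply: W_noninc.
by near: t; apply: nbhs_pinfty_ge; exact: num_real.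
Unshelve. all: by end_near.
Qed.

End LyapunovDecay.

Section IrreducibleCoupling.
Variables (R : realType) (m : nat) (L : 'M[R]_m).
Hypothesis irrL : irreducible_mx L.

Lemma irreducible_mx_setT (I : {set 'I_m}) : I != finset.set0 ->
  (forall i j, i \in I -> j \notin I -> L i j = 0) -> I = [set: 'I_m]%SET.
Proof.
move=> I0 closedI; have [//|IT] := eqVneq I [set: 'I_m]%SET.
by case: irrL; exists I; split.
Qed.

Lemma irreducible_mx_const (T : eqType) (g : 'I_m -> T) :
  (forall i j, L i j != 0 -> g i = g j) -> forall i j, g i = g j.
Proof.
move=> gL i j; set I := [set k | g k == g i]%SET.
have I0 : I != finset.set0 by apply/set0Pn; exists i; rewrite inE.
suff /setP/(_ j) : I = [set: 'I_m]%SET by rewrite !inE => /eqP.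
apply: irreducible_mx_setT => // k l; rewrite !inE => /eqP gki gli.
by apply/eqP; apply: contraNT gli => /gL <-; rewrite gki.
Qed.

Hypothesis offdiag_ge0 : forall i j, i != j -> 0 <= L i j.
Hypothesis row_sum0 : forall i, \sum_j L i j = 0.

Lemma diag_le0 j : L j j <= 0.
Proof.
have := row_sum0 j; rewrite (bigD1 j) //= => sum0.
have : 0 <= \sum_(k | k != j) L j k by apply: sumr_ge0 => k kj; rewrite offdiag_ge0 // eq_sym.
lra.
Qed.

Lemma left_null_vector : (\rank L < m)%N -> exists2 u : 'rV[R]_m, u != 0 & u *m L = 0.
Proof.
move=> rkL; have K0 : kermx L != 0 by rewrite -mxrank_eq0 mxrank_ker subn_eq0 -ltnNge.
have [i Ki0|rows0] := pickP (fun i => row i (kermx L) != 0).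
  by exists (row i (kermx L)); rewrite // -row_mul mulmx_ker row0.
case/eqP: K0; apply/row_matrixP => i; rewrite row0.
by apply/eqP; rewrite -[_ == 0]negbK rows0.
Qed.

Lemma left_null_norm (u : 'rV[R]_m) : u *m L = 0 -> map_mx Num.norm u *m L = 0.
Proof.
move=> uL; pose g j := \sum_i `|u 0 i| * L i j.
have colE (w : 'rV[R]_m) j : (w *m L) 0 j = \sum_i w 0 i * L i j by rewrite mxE.
have g0 j : 0 <= g j.
  have off : \sum_(i < m | i != j) u 0 i * L i j = - (u 0 j * L j j).
    have := colE u j; rewrite uL mxE (bigD1 j) //= => /esym/eqP.
    by rewrite addrC addr_eq0 => /eqP.
  have : `|\sum_(i < m | i != j) u 0 i * L i j| <= \sum_(i < m | i != j) `|u 0 i| * L i j.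
    apply: le_trans (ler_norm_sum _ _ _) (ler_sum _ _) => i ij.
    by rewrite normrM (ger0_norm (offdiag_ge0 ij)).
  rewrite off normrN normrM (ler0_norm (diag_le0 j)) => le.
  by rewrite /g (bigD1 j) //=; lra.
have gsum : \sum_j g j = 0.
  rewrite /g exchange_big big1 //= => i _.
  by rewrite -mulr_sumr row_sum0 mulr0.
apply/rowP => j; rewrite colE mxE.
under eq_bigr do rewrite mxE.
exact: (psumr_eq0P (fun j _ => g0 j) gsum).
Qed.

Lemma left_null_nonneg_pos (w : 'rV[R]_m) : w != 0 -> (forall i, 0 <= w 0 i) ->
  w *m L = 0 -> forall i, 0 < w 0 i.
Proof.
move=> w0 wge0 wL; set I := [set i | w 0 i != 0]%SET.
have I0 : I != finset.set0.
  apply: contraNneq w0 => I0; apply/eqP/rowP => i; rewrite mxE.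
  have : i \notin I by rewrite I0 inE.
  by rewrite inE negbK => /eqP.
suff IT : I = [set: 'I_m]%SET.
  move=> i; have : i \in I by rewrite IT inE.
  by rewrite inE => wi; rewrite lt_neqAle eq_sym wi wge0.
apply: irreducible_mx_setT => // i j; rewrite !inE negbK => wi /eqP wj.
have ij : i != j by apply: contraNneq wi => ->; rewrite wj.
have : (w *m L) 0 j = 0 by rewrite wL mxE.
rewrite mxE (bigD1 i) //= => sum0.
have rest : 0 <= \sum_(k | k != i) w 0 k * L k j.
  apply: sumr_ge0 => k _; have [->|kj] := eqVneq k j; first by rewrite wj mul0r.
  by rewrite mulr_ge0 ?wge0 ?offdiag_ge0.
have wi0 : 0 < w 0 i by rewrite lt_neqAle eq_sym wi wge0.
have Lij0 : 0 <= L i j by rewrite offdiag_ge0.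
apply/eqP; rewrite eq_le Lij0 andbT -(pmulr_rle0 _ wi0); lra.
Qed.

Lemma left_null_vector_pos : (\rank L < m)%N ->
  exists2 xi : 'I_m -> R, (forall i, 0 < xi i) & forall j, \sum_i xi i * L i j = 0.
Proof.
case/left_null_vector => u u0 /left_null_norm uL.
have nu0 : map_mx Num.norm u != 0.
  apply: contraNneq u0 => nu0; apply/eqP/rowP => i.
  by have := congr1 (fun w : 'rV[R]_m => w 0 i) nu0; rewrite !mxE => /normr0_eq0.
have nu_ge0 i : 0 <= map_mx Num.norm u 0 i by rewrite mxE.
exists (fun i => `|u 0 i|) => [i|j].
  by have := left_null_nonneg_pos nu0 nu_ge0 uL i; rewrite mxE.
have := congr1 (fun w : 'rV[R]_m => w 0 j) uL; rewrite !mxE.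
by under eq_bigr do rewrite mxE.
Qed.

End IrreducibleCoupling.

Section QuadraticFormDerivative.
Variables (R : realType) (n : nat).

Lemma is_derive_entry p q (X : R -> 'M[R]_(p, q)) (t : R) D a b :
  is_derive t 1 X D -> is_derive t 1 (fun s => X s a b) (D a b).
Proof.
move=> XD; have dX : derivable X t 1 by exact: ex_derive.
have := derive_mx dX; rewrite derive_val => ->; rewrite mxE.
by apply: derivableP; exact: ((derivable_mxP X t 1).1 dX a b).
Qed.

Lemma is_derive_qform (X Y : R -> 'cV[R]_n) (A : 'M[R]_n) (t : R) dX dY :
  is_derive t 1 X dX -> is_derive t 1 Y dY ->
  is_derive t 1 (fun s => qform (X s) A (Y s)) (qform dX A (Y t) + qform (X t) A dY).
Proof.
move=> XD YD; under eq_fun do rewrite qformE.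
have term a b := is_deriveM
  (is_deriveM (is_derive_entry a 0 XD) (is_derive_cst (A a b) t 1)) (is_derive_entry b 0 YD).
apply: is_derive_eq.
  rewrite -fct_sumE; apply: is_derive_sum => a.
  by rewrite -fct_sumE; apply: is_derive_sum => b; exact: term.
rewrite !qformE -big_split; apply: eq_bigr => a _.
rewrite -big_split; apply: eq_bigr => b _ /=.
by rewrite /GRing.scale /= mulrfctE /=; ring.
Qed.

End QuadraticFormDerivative.

Section VectorFamilies.
Variables (R : realType) (n m : nat).
Implicit Types (E : 'I_m -> 'cV[R]_n) (v : 'rV[R]_(m * n)) (w : 'I_m -> R).

(* A family of [m] vectors of [R^n] is encoded as a row vector of length [m * n], where
   compactness of the unit sphere is available. *)
Definition unpack v i : 'cV[R]_n := \col_a v 0 (mxvec_index i a).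

Definition pack E : 'rV[R]_(m * n) := mxvec (\matrix_(i, a) E i a 0).

Lemma unpackK E : unpack (pack E) = E.
Proof.
by apply: boolp.funext => i; apply/matrixP => a b; rewrite !mxE mxvecE mxE (ord1 b).
Qed.

Lemma unpackZ (a : R) v i : unpack (a *: v) i = a *: unpack v i.
Proof. by apply/matrixP => b c; rewrite !mxE. Qed.

Lemma unpack_neq0 v : v != 0 -> exists i, unpack v i != 0.
Proof.
move=> v0; have [i ui|unpack0] := pickP (fun i => unpack v i != 0); first by exists i.
case/eqP: v0; rewrite -[v]vec_mxK; apply/eqP; rewrite mxvec_eq0; apply/eqP/matrixP => i a.
by move/negbFE/eqP/matrixP/(_ a 0): (unpack0 i); rewrite !mxE.
Qed.

Lemma continuous_sumr (T : topologicalType) (I : finType) (F : I -> T -> R) :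
  (forall i, continuous (F i)) -> continuous (fun x => \sum_i F i x).
Proof. by move=> cF; apply: continuous_big => // -[x y]; exact: add_continuous. Qed.

Lemma continuous_unpack_qform i j (M : 'M[R]_n) :
  continuous (fun v => qform (unpack v i) M (unpack v j)).
Proof.
have coord k : continuous (fun v : 'rV[R]_(m * n) => v 0 k) by exact: coord_continuous.
have cM a b : continuous (fun _ : 'rV[R]_(m * n) => M a b) by move=> v; exact: cst_continuous.
have -> : (fun v => qform (unpack v i) M (unpack v j)) = fun v =>
    \sum_a \sum_b v 0 (mxvec_index i a) * M a b * v 0 (mxvec_index j b).
  apply: boolp.funext => v; rewrite qformE.
  by apply: eq_bigr => a _; apply: eq_bigr => b _; rewrite !mxE.
apply: continuous_sumr => a; apply: continuous_sumr => b v.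
exact: (continuousM (continuousM (coord _ v) (cM a b v)) (coord _ v)).
Qed.

Definition wqform w (M : 'M[R]_n) E := \sum_i w i * qform (E i) M (E i).

Lemma continuous_wqform w M : continuous (fun v => wqform w M (unpack v)).
Proof.
rewrite /wqform; apply: continuous_sumr => i v.
have cw : continuous (fun _ : 'rV[R]_(m * n) => w i) by move=> ?; exact: cst_continuous.
exact: (continuousM (cw v) (@continuous_unpack_qform i i M v)).
Qed.

Lemma hom2_wqform w M : hom2 (fun v => wqform w M (unpack v)).
Proof.
move=> a v; rewrite /wqform mulr_sumr; apply: eq_bigr => i _.
by rewrite !unpackZ qformZZ mulrCA.
Qed.

Lemma wqform_ge0 w M E : (forall i, 0 <= w i) -> posdef M -> 0 <= wqform w M E.
Proof. by move=> w0 Mpd; apply: sumr_ge0 => i _; rewrite mulr_ge0 ?posdef_ge0. Qed.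

Lemma wqform_gt0 w M E i : (forall i, 0 < w i) -> posdef M -> E i != 0 ->
  0 < wqform w M E.
Proof.
move=> w0 Mpd Ei0; rewrite /wqform (bigD1 i) //= ltr_pwDl //.
  by rewrite mulr_gt0 //; case: Mpd => _; apply.
by apply: sumr_ge0 => j _; rewrite mulr_ge0 ?posdef_ge0 ?ltW.
Qed.

Lemma is_derive_wqform w (M : 'M[R]_n) (E : R -> 'I_m -> 'cV[R]_n) D (t : R) :
  M^T = M -> (forall j, is_derive t 1 (E^~ j) (D j)) ->
  is_derive t 1 (fun s => wqform w M (E s)) (2 * \sum_j w j * qform (E t j) M (D j)).
Proof.
move=> Msym ED; apply: is_derive_eq.
  rewrite -fct_sumE; apply: is_derive_sum => j.
  exact: is_deriveZ (is_derive_qform M (ED j) (ED j)).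
rewrite mulr_sumr; apply: eq_bigr => j _.
by rewrite /GRing.scale /= (qform_sym _ _ Msym); ring.
Qed.

Lemma norm_le_qform1 (u : 'cV[R]_n) (e : R) : 0 <= e ->
  qform u 1%:M u <= e ^+ 2 -> `|u| <= e.
Proof.
move=> e0 ue; rewrite [leLHS]/Num.Def.normr /= mx_normrE (bigmax_le _ e0) //= => -[a b] _.
rewrite (ord1 b) -ler_sqr ?nnegrE // real_normK ?num_real //.
apply: le_trans ue; rewrite qform1 (bigD1 a) //= lerDl.
by apply: sumr_ge0 => i _; exact: sqr_ge0.
Qed.

Lemma wqform_dominated w w' (M M' : 'M[R]_n) : (forall i, 0 < w i) -> posdef M ->
  exists2 K, 0 < K & forall E, wqform w' M' E <= K * wqform w M E.
Proof.
move=> w0 Mpd; have [K [K0 le]] : exists K, 0 < K /\ forall v,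
    wqform w' M' (unpack v) <= K * wqform w M (unpack v).
  apply: hom2_dominated; try exact: continuous_wqform; try exact: hom2_wqform.
  by move=> v /unpack_neq0 [i vi]; exact: wqform_gt0 vi.
by exists K => // E; have := le (pack E); rewrite !unpackK.
Qed.

Lemma wqform_cvg0 (T : Type) (F : set_system T) {FF : Filter F} w (M : 'M[R]_n)
    (E : T -> 'I_m -> 'cV[R]_n) : (forall i, 0 < w i) -> posdef M ->
  wqform w M (E t) @[t --> F] --> (0 : R) ->
  forall i, E t i @[t --> F] --> (0 : 'cV[R]_n).
Proof.
move=> w0 Mpd /cvgrPdist_le V0 i; apply/cvgrPdist_le => e e0.
have [K K0 NV] := wqform_dominated (fun=> 1) 1%:M w0 Mpd.
apply: filterS (V0 _ (divr_gt0 (exprn_gt0 2 e0) K0)) => t.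
rewrite !sub0r !normrN => /(le_trans (ler_norm _)); rewrite ler_pdivlMr // mulrC => Ve.
apply: norm_le_qform1 (ltW e0) (le_trans _ (le_trans (NV _) Ve)).
rewrite /wqform (bigD1 i) //= mul1r lerDl.
by apply: sumr_ge0 => j _; rewrite mul1r; apply: posdef_ge0; exact: posdef1.
Qed.

End VectorFamilies.

Section PinnedNetwork.
Variables (R : realType) (n m k : nat) (L : 'M[R]_m) (xi : 'I_m -> R).
Variables (P : 'M[R]_n) (B : 'M[R]_(n, k)) (ep : R) (i0 : 'I_m).
Hypothesis xi_gt0 : forall i, 0 < xi i.
Hypothesis offdiag_ge0 : forall i j, i != j -> 0 <= L i j.
Hypothesis row_sum0 : forall i, \sum_j L i j = 0.
Hypothesis xi_left_null : forall j, \sum_i xi i * L i j = 0.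
Implicit Types (E : 'I_m -> 'cV[R]_n) (v : 'rV[R]_(m * n)).

Definition coupling_form E := \sum_i \sum_j xi i * L i j * qform (E i) (B *m B^T) (E j).

Definition pinning_form E := ep * xi i0 * qform (E i0) P (E i0) - coupling_form E.

Lemma gram_sym : (B *m B^T)^T = B *m B^T.
Proof. by rewrite trmx_mul trmxK. Qed.

Lemma coupling_formE E : coupling_form E =
  - (\sum_i \sum_j xi i * L i j * qform (E i - E j) (B *m B^T) (E i - E j)) / 2.
Proof.
set q := fun i j => qform (E i) (B *m B^T) (E j).
have diag_i : \sum_i \sum_j xi i * L i j * q i i = 0.
  by rewrite big1 // => i _; rewrite -mulr_suml -mulr_sumr row_sum0 mulr0 mul0r.
have diag_j : \sum_i \sum_j xi i * L i j * q j j = 0.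
  by rewrite exchange_big big1 //= => j _; rewrite -mulr_suml xi_left_null mul0r.
have -> : \sum_i \sum_j xi i * L i j * qform (E i - E j) (B *m B^T) (E i - E j) =
    \sum_i \sum_j xi i * L i j * q i i + \sum_i \sum_j xi i * L i j * q j j
    - 2 * coupling_form E.
  rewrite /coupling_form mulr_sumr -big_split -sumrB; apply: eq_bigr => i _ /=.
  rewrite mulr_sumr -big_split -sumrB; apply: eq_bigr => j _ /=.
  by rewrite !qformBl !qformBr [qform (E j) _ (E i)](qform_sym _ _ gram_sym) /q; ring.
by rewrite diag_i diag_j; field.
Qed.

Lemma disagreement_term_ge0 E i j :
  0 <= xi i * L i j * qform (E i - E j) (B *m B^T) (E i - E j).
Proof.
have [->|ij] := eqVneq i j; first by rewrite subrr qform_tr qform0r mulr0.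
by rewrite mulr_ge0 ?qform_gram_ge0 // mulr_ge0 ?offdiag_ge0 // ltW.
Qed.

Lemma pinning_formE E : pinning_form E = ep * xi i0 * qform (E i0) P (E i0) +
  (\sum_i \sum_j xi i * L i j * qform (E i - E j) (B *m B^T) (E i - E j)) / 2.
Proof. by rewrite /pinning_form coupling_formE mulNr opprK. Qed.

Lemma continuous_pinning_form : continuous (fun v => pinning_form (unpack v)).
Proof.
have cst (a : R) : continuous (fun _ : 'rV[R]_(m * n) => a) by move=> ?; exact: cst_continuous.
have cpin : continuous (fun v => ep * xi i0 * qform (unpack v i0) P (unpack v i0)).
  by move=> v; exact: (continuousM (cst _ v) (@continuous_unpack_qform _ _ _ i0 i0 P v)).
have ccoup : continuous (fun v => coupling_form (unpack v)).
  apply: continuous_sumr => i; apply: continuous_sumr => j v.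
  exact: (continuousM (cst _ v) (@continuous_unpack_qform _ _ _ i j _ v)).
by move=> v; exact: (continuousB (cpin v) (ccoup v)).
Qed.

Lemma hom2_pinning_form : hom2 (fun v => pinning_form (unpack v)).
Proof.
move=> a v; rewrite /pinning_form /coupling_form mulrBr !mulr_sumr !unpackZ qformZZ.
congr (_ - _); first ring.
apply: eq_bigr => i _; rewrite mulr_sumr; apply: eq_bigr => j _.
by rewrite !unpackZ qformZZ; ring.
Qed.

Hypothesis ep_gt0 : 0 < ep.
Hypothesis P_pd : posdef P.

Lemma pinning_form_ge0 E : 0 <= pinning_form E.
Proof.
rewrite pinning_formE addr_ge0 //.
  by rewrite !mulr_ge0 ?posdef_ge0 // ltW.
rewrite divr_ge0 // sumr_ge0 // => i _.
by rewrite sumr_ge0 // => j _; exact: disagreement_term_ge0.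
Qed.

Lemma pinning_form_eq0 E : irreducible_mx L -> pinning_form E = 0 ->
  forall i, B^T *m E i = 0.
Proof.
move=> irrL; rewrite pinning_formE.
set pin := ep * _ * _; set D := \sum_i _.
have pin0 : 0 <= pin by rewrite !mulr_ge0 ?posdef_ge0 // ltW.
have rows_ge0 i : 0 <= \sum_j xi i * L i j * qform (E i - E j) (B *m B^T) (E i - E j).
  by rewrite sumr_ge0 // => j _; exact: disagreement_term_ge0.
have D0 : 0 <= D by rewrite sumr_ge0.
move=> sum0; have pin_eq0 : pin = 0 by lra.
have D_eq0 : D = 0 by lra.
have Ei00 : E i0 = 0.
  apply: (posdef_eq0 P_pd); apply/eqP; move/eqP: pin_eq0.
  by rewrite !mulf_eq0 (gt_eqF ep_gt0) (gt_eqF (xi_gt0 i0)).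
have link i j : L i j != 0 -> B^T *m E i = B^T *m E j.
  move=> Lij; apply/eqP; rewrite -subr_eq0 -mulmxBr; apply/eqP/qform_gram_eq0.
  have row_i0 := psumr_eq0P (fun i' _ => rows_ge0 i') D_eq0 (i := i) isT.
  have := psumr_eq0P (fun j' _ => disagreement_term_ge0 E i j') row_i0 (i := j) isT.
  by move/eqP; rewrite !mulf_eq0 (gt_eqF (xi_gt0 i)) (negbTE Lij) /= => /eqP.
move=> i; rewrite (irreducible_mx_const irrL link i i0) Ei00 mulmx0 //.
Qed.

Lemma wqform_lt0_of_pinning_form_eq0 (PD : 'M[R]_n) (eps : R) E i : irreducible_mx L ->
  0 < eps -> (forall u : 'cV[R]_n, exists w, PD *m u = B *m B^T *m w) ->
  E i != 0 -> pinning_form E = 0 -> wqform xi (PD - eps *: 1%:M) E < 0.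
Proof.
move=> irrL eps0 ranPD Ei0 /(pinning_form_eq0 irrL) BE0.
have PDE0 j : qform (E j) PD (E j) = 0.
  by have [w PDw] := ranPD (E j); exact: qform_gram_range PDw (BE0 j).
have -> : wqform xi (PD - eps *: 1%:M) E = - (eps * wqform xi 1%:M E).
  rewrite /wqform mulr_sumr -sumrN; apply: eq_bigr => j _.
  by rewrite qformBm qformZm PDE0; ring.
by rewrite oppr_lt0 mulr_gt0 // (wqform_gt0 xi_gt0 (@posdef1 _ _) Ei0).
Qed.

Lemma pinning_Finsler (PD : 'M[R]_n) (eps : R) : irreducible_mx L -> 0 < eps ->
  (forall u : 'cV[R]_n, exists w, PD *m u = B *m B^T *m w) ->
  exists c0 d, 0 < d /\ forall c, c0 <= c -> forall E,
    wqform xi (PD - eps *: 1%:M) E - c * pinning_form E <= - d * wqform (fun=> 1) 1%:M E.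
Proof.
move=> irrL eps0 ranPD.
have [c0 [d [d0 le]]] : exists c0 d, 0 < d /\ forall c, c0 <= c -> forall v,
    wqform xi (PD - eps *: 1%:M) (unpack v) - c * pinning_form (unpack v)
    <= - d * wqform (fun=> 1) 1%:M (unpack v).
  apply: hom2_Finsler; try exact: continuous_wqform; try exact: hom2_wqform.
- exact: continuous_pinning_form.
- exact: hom2_pinning_form.
- by move=> v; exact: pinning_form_ge0.
- by move=> v /unpack_neq0 [i vi]; apply: wqform_gt0 vi => //; exact: posdef1.
- by move=> v /unpack_neq0 [i vi]; exact: wqform_lt0_of_pinning_form_eq0 vi.
by exists c0, d; split => // c c_ge E; have := le c c_ge (pack E); rewrite !unpackK.
Qed.

End PinnedNetwork.

Section PinnedDynamics.
Variables (R : realType) (n m k : nat) (L : 'M[R]_m) (xi : 'I_m -> R).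
Variables (P Gamma Delta : 'M[R]_n) (B : 'M[R]_(n, k)) (f : 'cV[R]_n -> 'cV[R]_n).
Variables (ep eps c : R) (i0 : 'I_m).
Hypothesis xi_ge0 : forall i, 0 <= xi i.
Hypothesis row_sum0 : forall i, \sum_j L i j = 0.
Hypothesis PGamma_gram : P *m Gamma = B *m B^T.
Hypothesis f_qmi : forall x y, qform (x - y) P ((f x - f y) - Delta *m (x - y))
  <= - eps * qform (x - y) 1%:M (x - y).

Definition pinned_field (z : 'cV[R]_n) (y : 'I_m -> 'cV[R]_n) j :=
  f (y j) + c *: \sum_l (L j l *: (Gamma *m y l))
  - (if j == i0 then (c * ep) *: (y j - z) else 0).

Lemma qform_f_le x y :
  qform (x - y) P (f x - f y) <= qform (x - y) (P *m Delta - eps *: 1%:M) (x - y).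
Proof.
have := f_qmi x y; rewrite [qform _ P (_ - Delta *m _)]qformBr qformBm qformZm qformMA.
lra.
Qed.

Lemma qform_coupling_term (y : 'I_m -> 'cV[R]_n) z j :
  qform (y j - z) P (c *: \sum_l (L j l *: (Gamma *m y l))) =
  c * \sum_l L j l * qform (y j - z) (B *m B^T) (y l - z).
Proof.
rewrite qformZr qform_sumr; congr (_ * _).
under [RHS]eq_bigr do rewrite qformBr mulrBr.
rewrite sumrB -mulr_suml row_sum0 mul0r subr0; apply: eq_bigr => l _.
by rewrite qformZr -PGamma_gram qformMA.
Qed.

Lemma error_dissipation (y : 'I_m -> 'cV[R]_n) z :
  \sum_j xi j * qform (y j - z) P (pinned_field z y j - f z) <=
  wqform xi (P *m Delta - eps *: 1%:M) (fun j => y j - z)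
  - c * pinning_form L xi P B ep i0 (fun j => y j - z).
Proof.
set E := fun j => y j - z.
have term j : xi j * qform (E j) P (pinned_field z y j - f z) <=
    xi j * qform (E j) (P *m Delta - eps *: 1%:M) (E j)
    + c * (\sum_l xi j * L j l * qform (E j) (B *m B^T) (E l))
    - (if j == i0 then c * ep * (xi j * qform (E j) P (E j)) else 0).
  rewrite /pinned_field addrAC [f (y j) + _ - f z]addrAC qformBr qformDr.
  rewrite qform_coupling_term -/(E j).
  have -> : \sum_l xi j * L j l * qform (E j) (B *m B^T) (E l) =
      xi j * \sum_l L j l * qform (E j) (B *m B^T) (E l).
    by rewrite mulr_sumr; apply: eq_bigr => l _; rewrite mulrA.
  have := ler_wpM2l (xi_ge0 j) (qform_f_le (y j) z).
  by case: (j == i0); rewrite ?qformZr ?qform0r -/(E j); nra.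
apply: le_trans (ler_sum _ (fun j _ => term j)) _.
rewrite sumrB big_split /= -mulr_sumr -big_mkcond /= big_pred1_eq /pinning_form /coupling_form.
by rewrite /wqform mulrBr; lra.
Qed.

Lemma pinned_lyapunov_cvg0 (d K : R) (s : R -> 'cV[R]_n) (x : 'I_m -> R -> 'cV[R]_n) :
  0 < d -> 0 < K -> posdef P ->
  (forall E, wqform xi (P *m Delta - eps *: 1%:M) E - c * pinning_form L xi P B ep i0 E
     <= - d * wqform (fun=> 1) 1%:M E) ->
  (forall E, wqform xi P E <= K * wqform (fun=> 1) 1%:M E) ->
  (forall t : R, 0 < t -> is_derive t 1 s (f (s t))) ->
  (forall i (t : R), 0 < t -> is_derive t 1 (x i) (pinned_field (s t) (x^~ t) i)) ->
  wqform xi P (fun j => x j t - s t) @[t --> +oo] --> 0.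
Proof.
move=> d0 K0 Ppd finsler VN s_sol x_sol.
apply: (@lyapunov_cvg0 _ _ (2 * d / K)) => [|t|t t0]; first by rewrite divr_gt0 ?mulr_gt0.
  exact: wqform_ge0.
have Vd : is_derive t 1 (fun t => wqform xi P (fun j => x j t - s t)) (2 * \sum_j xi j *
    qform (x j t - s t) P (pinned_field (s t) (x^~ t) j - f (s t))).
  by apply: is_derive_wqform (proj1 Ppd) _ => j; exact: is_deriveB (x_sol j t t0) (s_sol t t0).
apply: ex_intro2 Vd _.
have := error_dissipation (x^~ t) (s t); have := finsler (fun j => x j t - s t).
have := VN (fun j => x j t - s t); rewrite -ler_pdivrMl //.
nra.
Qed.

End PinnedDynamics.

Theorem proposition3 (R : realType) (n m : nat) (hm : (0 < m)%N)
  (f : 'cV[R]_n -> 'cV[R]_n) (Gamma : 'M[R]_n) (s : R -> 'cV[R]_n)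
  (L : 'M[R]_m) (eps_pin : R) (P Delta : 'M[R]_n) (eps : R) :
  continuous f ->
  (forall t : R, 0 < t -> is_derive t (1:R) s (f (s t))) ->
  irreducible_mx L ->
  \rank L = (m - 1)%N ->
  (forall i j : 'I_m, i != j -> 0 <= L i j) ->
  (forall i : 'I_m, \sum_(j < m) L i j = 0) ->
  0 < eps_pin ->
  posdef P ->
  0 < eps ->
  (forall x y : 'cV[R]_n,
      qform (x - y) P ((f x - f y) - Delta *m (x - y))
      <= - eps * qform (x - y) 1%:M (x - y)) ->
  (forall v : 'cV[R]_n, Ran (P *m Delta) v <-> Ran (P *m Gamma) v) ->
  (exists (k : nat) (B : 'M[R]_(n, k)), P *m Gamma = B *m B^T) ->
  (forall u : 'cV[R]_n, Ran (P *m Gamma) u -> u != 0 ->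
      0 < qform u (P *m Gamma) u) ->
  exists c0 : R, forall c : R, c0 <= c ->
    forall x : 'I_m -> R -> 'cV[R]_n,
      (forall (i : 'I_m) (t : R), 0 < t ->
         is_derive t (1:R) (x i)
           (f (x i t) + c *: \sum_(j < m) (L i j *: (Gamma *m x j t))
            - (if i == Ordinal hm then (c * eps_pin) *: (x i t - s t) else 0))) ->
      forall i : 'I_m, (x i t - s t) @[t --> +oo] --> (0 : 'cV[R]_n).
Proof.
move=> _ s_sol irrL rkL off rs pin0 Ppd eps0 f_qmi ranPD [k [B PGamma]] _.
have rkL_lt : (\rank L < m)%N by rewrite rkL subn1 ltn_predL.
have [xi xi_gt0 xi_null] := left_null_vector_pos irrL off rs rkL_lt.
have ranG (u : 'cV[R]_n) : exists w, P *m Delta *m u = B *m B^T *m w.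
  by have [w ->] := (ranPD _).1 (ex_intro _ u erefl); exists w; rewrite PGamma.
have [c0 [d [d0 finsler]]] :=
  pinning_Finsler (Ordinal hm) xi_gt0 off rs xi_null pin0 Ppd irrL eps0 ranG.
have [K K0 VN] := wqform_dominated xi P (fun=> @ltr01 R) (@posdef1 R n).
exists c0 => c c_ge x x_sol.
have V_cvg0 := pinned_lyapunov_cvg0 (fun j => ltW (xi_gt0 j)) rs PGamma f_qmi d0 K0 Ppd
  (finsler c c_ge) VN s_sol x_sol.
exact: wqform_cvg0 xi_gt0 Ppd V_cvg0.
Qed.
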